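(* Let $G$ be a finite group and let $S=\bigoplus_{g\in G}S_g$ be an epsilon-strongly $G$-graded ring with principal component $R=S_e$. If $R$ is left (respectively right) noetherian, then $S$ is left (respectively right) noetherian.
   Context: All rings are associative with multiplicative identity $1\neq 0$. A ring $S$ is $G$-graded if $S=\bigoplus_{g\in G}S_g$ for additive subgroups $S_g$ with $S_gS_h\subseteq S_{gh}$ for all $g,h\in G$; $S_e$ is the principal component. $S$ is epsilon-strongly $G$-graded if (a) $S_gS_{g^{-1}}S_g=S_g$ for all $g\in G$, and (b) for each $g\in G$ the ideal $S_gS_{g^{-1}}$ of $S_e$ has a multiplicative identity. *)

From mathcomp Require Import all_boot all_order all_algebra all_fingroup.
Set Implicit Arguments. Unset Strict Implicit. Unset Printing Implicit Defensive.
Import GRing.Theory.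
Local Open Scope ring_scope.

Section Graded.
Variable R : nzRingType.

Definition is_addsubgroup (A : R -> Prop) : Prop :=
  A 0 /\ forall x y, A x -> A y -> A (x - y).

Definition prod2 (A B : R -> Prop) (x : R) : Prop :=
  exists n (a b : 'I_n -> R),
    (forall i, A (a i) /\ B (b i)) /\ x = \sum_(i < n) a i * b i.

Definition prod3 (A B C : R -> Prop) (x : R) : Prop :=
  exists n (a b c : 'I_n -> R),
    (forall i, [/\ A (a i), B (b i) & C (c i)]) /\
    x = \sum_(i < n) a i * b i * c i.

Definition is_graded (gT : finGroupType) (S_ : gT -> R -> Prop) : Prop :=
  [/\ (forall g, is_addsubgroup (S_ g)),
      (forall s, exists x : gT -> R,
          (forall g, S_ g (x g)) /\ s = \sum_(g : gT) x g),
      (forall x : gT -> R, (forall g, S_ g (x g)) ->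
          \sum_(g : gT) x g = 0 -> forall g, x g = 0)
    & (forall g h a b, S_ g a -> S_ h b -> S_ (g * h)%g (a * b))].

Definition epsilon_strongly_graded (gT : finGroupType) (S_ : gT -> R -> Prop)
  : Prop :=
  [/\ is_graded S_,
      (forall g x, S_ g x <-> prod3 (S_ g) (S_ g^-1%g) (S_ g) x)
    & (forall g, exists e, prod2 (S_ g) (S_ g^-1%g) e /\
          forall x, prod2 (S_ g) (S_ g^-1%g) x -> e * x = x /\ x * e = x)].

Definition left_ideal_in (T I : R -> Prop) : Prop :=
  [/\ (forall x, I x -> T x), I 0,
      (forall x y, I x -> I y -> I (x - y))
    & (forall r x, T r -> I x -> I (r * x))].

Definition right_ideal_in (T I : R -> Prop) : Prop :=
  [/\ (forall x, I x -> T x), I 0,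
      (forall x y, I x -> I y -> I (x - y))
    & (forall r x, T r -> I x -> I (x * r))].

Definition left_noetherian_in (T : R -> Prop) : Prop :=
  forall I : nat -> R -> Prop, (forall n, left_ideal_in T (I n)) ->
    (forall n x, I n x -> I n.+1 x) ->
    exists N, forall n, (N <= n)%N -> forall x, I n x -> I N x.

Definition right_noetherian_in (T : R -> Prop) : Prop :=
  forall I : nat -> R -> Prop, (forall n, right_ideal_in T (I n)) ->
    (forall n x, I n x -> I n.+1 x) ->
    exists N, forall n, (N <= n)%N -> forall x, I n x -> I N x.

Definition whole_ring : R -> Prop := fun _ => True.

End Graded.

From mathcomp Require Import all_boot all_order all_algebra all_fingroup.
Set Implicit Arguments. Unset Strict Implicit. Unset Printing Implicit Defensive.
Import GRing.Theory.
Local Open Scope ring_scope.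

(* Let [eps_g] be the unit of [S_g S_(g^-1)] and write [eps_(g^-1) = sum_j c_j d_j]
   with [c_j] in [S_(g^-1)], [d_j] in [S_g].  Every [s] in [S_g] lies in
   [S_g S_(g^-1) S_g], hence [s = s eps_(g^-1) = sum_j (s c_j) d_j] with [s c_j] in
   [S_e]: each [S_g], and so [S] ([G] being finite), is a finitely generated left
   [S_e]-module.  Finitely generated modules over a left noetherian ring are
   noetherian, and left ideals of [S] are [S_e]-submodules.  Symmetrically
   [s = eps_g s] makes [S] a finitely generated right [S_e]-module, which is the
   left case in the converse ring. *)

Section NoetherianModules.
Variables (T : nzRingType) (R : T -> Prop).
Hypothesis R_sub : is_addsubgroup R.
Hypothesis R_mul : forall a b, R a -> R b -> R (a * b).

Definition lsubmod (M : T -> Prop) :=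
  [/\ M 0, (forall x y, M x -> M y -> M (x - y))
    & (forall r x, R r -> M x -> M (r * x))].

Definition ascending (N : nat -> T -> Prop) := forall n x, N n x -> N n.+1 x.

Definition stationary (N : nat -> T -> Prop) :=
  exists K, forall n, (K <= n)%N -> forall x, N n x -> N K x.

Definition noetherian_mod (M : T -> Prop) :=
  forall N : nat -> T -> Prop, (forall n, lsubmod (N n)) ->
    (forall n x, N n x -> M x) -> ascending N -> stationary N.

Lemma lsubmodD M x y : lsubmod M -> M x -> M y -> M (x + y).
Proof.
move=> [M0 MB _] Mx My; rewrite -[y]opprK -[- y]sub0r.
exact: MB _ _ Mx (MB _ _ M0 My).
Qed.

Lemma ascending_le N m n x : ascending N -> (m <= n)%N -> N m x -> N n x.
Proof.
move=> ascN /subnK <-; elim: (n - m)%N => [|k IHk] Nx; first by [].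
exact: ascN (IHk Nx).
Qed.

Definition lcyclic (u : T) x := exists2 r, R r & x = r * u.

Lemma lsubmod_lcyclic u : lsubmod (lcyclic u).
Proof.
have [R0 RB] := R_sub; split.
- by exists 0; rewrite ?mul0r.
- by move=> _ _ [r Rr ->] [s Rs ->]; exists (r - s); [exact: RB | rewrite mulrBl].
- by move=> r _ Rr [s Rs ->]; exists (r * s); [exact: R_mul | rewrite mulrA].
Qed.

Lemma noetherian_lcyclic u :
  left_noetherian_in R -> noetherian_mod (lcyclic u).
Proof.
move=> noethR N subN Nu ascN; have [R0 RB] := R_sub.
pose J n r := R r /\ N n (r * u).
have [K statJ] : stationary J.
  apply: noethR => [n|n r [Rr Nr]]; last by split; [|exact: ascN].
  have [N0 NB NM] := subN n; split.
  - by move=> r [].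
  - by split; rewrite ?mul0r.
  - move=> r s [Rr Nr] [Rs Ns].
    by split; [exact: RB | rewrite mulrBl; exact: NB].
  - by move=> r s Rr [Rs Ns]; split; [exact: R_mul | rewrite -mulrA; exact: NM].
exists K => n le_Kn x Nx; have [r Rr def_x] := Nu _ _ Nx; rewrite def_x in Nx *.
by case: (statJ n le_Kn r (conj Rr Nx)).
Qed.

Definition addset (A B : T -> Prop) x := exists a b, [/\ A a, B b & x = a + b].

Lemma lsubmodI M A : lsubmod M -> lsubmod A -> lsubmod (fun x => M x /\ A x).
Proof.
move=> [M0 MB MM] [A0 AB AM]; split=> //.
- by move=> x y [Mx Ax] [My Ay]; split; [exact: MB | exact: AB].
- by move=> r x Rr [Mx Ax]; split; [exact: MM | exact: AM].
Qed.

Lemma lsubmod_addset_proj M A B : lsubmod M -> lsubmod A -> lsubmod B ->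
  lsubmod (fun b => B b /\ exists2 a, A a & M (a + b)).
Proof.
move=> [M0 MB MM] [A0 AB AM] [B0 BB BM]; split.
- by split; last by exists 0; rewrite ?addr0.
- move=> x y [Bx [a Aa Max]] [By [b Ab Mby]]; split; first exact: BB.
  by exists (a - b); [exact: AB | rewrite addrACA -opprD; exact: MB].
- move=> r x Rr [Bx [a Aa Max]]; split; first exact: BM.
  by exists (r * a); [exact: AM | rewrite -mulrDr; exact: MM].
Qed.

Lemma lsubmod_addset A B : lsubmod A -> lsubmod B -> lsubmod (addset A B).
Proof.
move=> [A0 AB AM] [B0 BB BM]; split.
- by exists 0, 0; rewrite addr0.
- move=> _ _ [a [b [Aa Bb ->]]] [a' [b' [Aa' Bb' ->]]].
  exists (a - a'), (b - b'); rewrite addrACA -opprD.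
  by split; [exact: AB | exact: BB |].
- move=> r _ Rr [a [b [Aa Bb ->]]].
  by exists (r * a), (r * b); rewrite mulrDr; split; [exact: AM | exact: BM |].
Qed.

(* A chain in [A + B] is stationary once both its traces in [A] and its
   projections to [B] are. *)
Lemma noetherian_addset A B : lsubmod A -> lsubmod B ->
  noetherian_mod A -> noetherian_mod B -> noetherian_mod (addset A B).
Proof.
move=> subA subB noethA noethB N subN NAB ascN.
have [K1 statA] : stationary (fun n x => N n x /\ A x).
  apply: noethA => [n | n x [] // | n x [Nx Ax]]; first exact: lsubmodI.
  by split; first exact: ascN.
have [K2 statB] : stationary (fun n b => B b /\ exists2 a, A a & N n (a + b)).
  apply: noethB => [n | n x [] // | n x [Bx [a Aa Nax]]].
    exact: lsubmod_addset_proj.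
  by split; last by exists a; last exact: ascN.
exists (maxn K1 K2) => n; rewrite geq_max => /andP[le_K1n le_K2n] x Nx.
have [a [b [Aa Bb def_x]]] := NAB _ _ Nx; rewrite def_x in Nx *.
have [_ [a' Aa' Na'b]] := statB n le_K2n b (conj Bb (ex_intro2 _ _ a Aa Nx)).
have [Naa' _] : N K1 (a - a') /\ A (a - a').
  apply: statA le_K1n _ _; split; last by case: subA => _ AB _; exact: AB.
  have -> : a - a' = a + b - (a' + b) by rewrite opprD addrACA subrr addr0.
  by case: (subN n) => _ NB _; apply: NB => //; exact: ascending_le Na'b.
rewrite -(subrK a' a) -addrA; apply: lsubmodD (subN _) _ _.
- exact: ascending_le (leq_maxl K1 K2) Naa'.
- exact: ascending_le (leq_maxr K1 K2) Na'b.
Qed.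

Fixpoint span (us : seq T) : T -> Prop :=
  if us is u :: us' then addset (lcyclic u) (span us') else fun x => x = 0.

Lemma lsubmod_span us : lsubmod (span us).
Proof.
elim: us => [|u us IHus] /=; last exact: lsubmod_addset (lsubmod_lcyclic u) IHus.
split=> //; first by move=> _ _ -> ->; rewrite subr0.
by move=> r _ _ ->; rewrite mulr0.
Qed.

Lemma noetherian_span us : left_noetherian_in R -> noetherian_mod (span us).
Proof.
move=> noethR; elim: us => [|u us IHus] /=.
  move=> N subN N0 _; exists 0%N => n _ x /N0 ->.
  by case: (subN 0%N).
apply: noetherian_addset (lsubmod_lcyclic u) (lsubmod_span us) _ IHus.
exact: noetherian_lcyclic.
Qed.

Lemma span_cat us vs x y : span us x -> span vs y -> span (us ++ vs) (x + y).
Proof.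
elim: us x => [|u us IHus] x /=; first by move=> ->; rewrite add0r.
move=> [a [x' [ua Sx' ->]]] Sy; exists a, (x' + y).
by rewrite -addrA; split=> //; exact: IHus.
Qed.

Lemma span_big (J : Type) (l : seq J) (r f : J -> T) :
  (forall j, R (r j)) -> span [seq f j | j <- l] (\sum_(j <- l) r j * f j).
Proof.
move=> Rr; elim: l => [|j l IHl] /=; first by rewrite big_nil.
rewrite big_cons; exists (r j * f j), (\sum_(j <- l) r j * f j).
by split=> //; exists (r j).
Qed.

Lemma span_of_decomposition (I : finType) (A : I -> T -> Prop) :
  (forall x, exists x_ : I -> T, (forall i, A i (x_ i)) /\ x = \sum_i x_ i) ->
  (forall i, exists us, forall x, A i x -> span us x) ->
  exists us, forall x, span us x.
Proof.
move=> decomp spanA.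
have [us span_sums] : exists us, forall x_ : I -> T, (forall i, A i (x_ i)) ->
    span us (\sum_i x_ i).
  elim: (index_enum I) => [|i l [us IHl]].
    by exists [::] => x_ _; rewrite big_nil.
  have [vs Avs] := spanA i.
  exists (vs ++ us) => x_ Ax; rewrite big_cons.
  by apply: span_cat; [exact: Avs | exact: IHl].
by exists us => x; have [x_ [Ax ->]] := decomp x; exact: span_sums.
Qed.

Lemma left_noetherian_of_span us : left_noetherian_in R ->
  (forall x, span us x) -> left_noetherian_in (@whole_ring T).
Proof.
move=> noethR spanT I idealI ascI.
apply: (noetherian_span noethR (N := I)) => // n.
by case: (idealI n) => _ I0 IB IM; split=> // r x _; exact: IM.
Qed.

End NoetherianModules.

Lemma prod2_mul (T : nzRingType) (A B : T -> Prop) a b :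
  A a -> B b -> prod2 A B (a * b).
Proof. by move=> Aa Bb; exists 1%N, (fun=> a), (fun=> b); rewrite big_ord1. Qed.

Section EpsilonStronglyGraded.
Variables (gT : finGroupType) (S : nzRingType) (S_ : gT -> S -> Prop).
Hypothesis S_eps : epsilon_strongly_graded S_.

Lemma principal_addsubgroup : is_addsubgroup (S_ 1%g).
Proof. by case: S_eps => [[]]. Qed.

Lemma principal_mul_closed a b : S_ 1%g a -> S_ 1%g b -> S_ 1%g (a * b).
Proof.
case: S_eps => [[_ _ _ S_mul] _ _] S1a S1b.
by have := S_mul _ _ _ _ S1a S1b; rewrite mulg1.
Qed.

Lemma graded_decomposition s :
  exists x_ : gT -> S, (forall g, S_ g (x_ g)) /\ s = \sum_g x_ g.
Proof. by case: S_eps => [[_ decomp _ _] _ _]. Qed.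

Lemma unit_mul_component g e s :
  (forall x, prod2 (S_ g) (S_ g^-1%g) x -> e * x = x) -> S_ g s -> e * s = s.
Proof.
case: S_eps => _ S_prod3 _ unit_e /S_prod3[n [a [b [c [abc ->]]]]].
rewrite mulr_sumr; apply: eq_bigr => i _; have [Sa Sb _] := abc i.
by rewrite mulrA unit_e //; exact: prod2_mul.
Qed.

Lemma component_mul_unit g e s :
  (forall x, prod2 (S_ g^-1%g) (S_ g) x -> x * e = x) -> S_ g s -> s * e = s.
Proof.
case: S_eps => _ S_prod3 _ unit_e /S_prod3[n [a [b [c [abc ->]]]]].
rewrite mulr_suml; apply: eq_bigr => i _; have [_ Sb Sc] := abc i.
by rewrite -!mulrA [b i * _]mulrA unit_e //; exact: prod2_mul.
Qed.

Lemma component_lspan g : exists us, forall s, S_ g s -> span (S_ 1%g) us s.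
Proof.
case: S_eps => [[_ _ _ S_mul] _ units].
have [e []] := units g^-1%g; rewrite invgK => -[m [c [d [cd ->]]]] unit_e.
exists [seq d j | j <- index_enum 'I_m] => s Ss.
rewrite -(component_mul_unit (fun x px => proj2 (unit_e x px)) Ss) mulr_sumr.
under eq_bigr do rewrite mulrA.
apply: span_big => j; have := S_mul _ _ _ _ Ss (proj1 (cd j)).
by rewrite mulgV.
Qed.

Lemma component_rspan g : exists us, forall s, S_ g s -> @span S^c (S_ 1%g) us s.
Proof.
case: S_eps => [[_ _ _ S_mul] _ units].
have [e [[m [a [b [ab ->]]]] unit_e]] := units g.
exists [seq a j | j <- index_enum 'I_m] => s Ss.
rewrite -(unit_mul_component (fun x px => proj1 (unit_e x px)) Ss) mulr_suml.
under eq_bigr do rewrite -mulrA.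
apply: (@span_big S^c _ _ _ (fun j => b j * s)) => j.
by have := S_mul _ _ _ _ (proj2 (ab j)) Ss; rewrite mulVg.
Qed.

End EpsilonStronglyGraded.

Theorem proposition3p4 (gT : finGroupType) (S : nzRingType)
  (S_ : gT -> S -> Prop) (Heps : epsilon_strongly_graded S_) :
  (left_noetherian_in (S_ 1%g) -> left_noetherian_in (@whole_ring S)) /\
  (right_noetherian_in (S_ 1%g) -> right_noetherian_in (@whole_ring S)).
Proof.
have decomp := graded_decomposition Heps.
split=> noethR.
  have [us spanS] := span_of_decomposition decomp (component_lspan Heps).
  exact: (left_noetherian_of_span (principal_addsubgroup Heps)
    (principal_mul_closed Heps) noethR spanS).
have [us spanS] := @span_of_decomposition S^c _ _ _ decomp (component_rspan Heps).
have mul_closed (a b : S^c) : S_ 1%g a -> S_ 1%g b -> S_ 1%g (a * b).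
  by move=> S1a S1b; exact: (principal_mul_closed Heps S1b S1a).
exact: (@left_noetherian_of_span S^c _ (principal_addsubgroup Heps)
  mul_closed us noethR spanS).
Qed.
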